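(* Let $i\in\{2,\dots,n\}$ and let $j\in\{1,\dots,i-1\}$ be the index of the disk that eliminates $D_i$, i.e., $t_i=t(i,j)$. Then \[ d\big(\nu(D_i^{t_i}),\nu(D_j^{t_i})\big)\le 2\big(|\nu(D_i^{t_i})|+|\nu(D_j^{t_i})|\big) \] and \[ \frac{1}{4\Delta}\le \frac{|\nu(D_i^{t_i})|}{|\nu(D_j^{t_i})|}\le 4\Delta. \]
   Context: Growing prioritized disks: centers $p_1,\dots,p_n\in[0,1]^2$ (pairwise distinct) and growth rates $v_1,\dots,v_n>0$; at time $t\ge0$ the disk $D_i^t$ is centered at $p_i$ with radius $tv_i$. Smaller index means higher priority; $t(i,j)=|p_ip_j|/(v_i+v_j)$. Whenever $D_i,D_j$ with $i<j$ touch at time $t(i,j)$ and neither has been removed before, $D_j$ is removed and $D_i$ keeps growing; $t_i$ is the time $D_i$ is removed ($t_1=\infty$); all $t(i,j)$ are pairwise distinct. $\Delta=\max_i v_i/\min_j v_j$. Quadtree $\mathcal{Q}$: a rooted tree in which each internal node has four children and each node $\nu$ has a square cell $b(\nu)$; the root cell is $[0,1]^2$ and a node's cell is split into four congruent quadrants giving its children's cells; subdivision stops when each cell at the bottom level contains at most one disk center and any cell containing a disk center is surrounded by two layers of empty cells. $|\nu|$ is the diameter of $b(\nu)$, and $d(\nu,\nu')$ is the smallest distance between a point of $b(\nu)$ and a point of $b(\nu')$. The disk $D_i^t$ occupies node $\nu$ if (i) $p_i\in b(\nu)$, (ii) $\nu$ is a leaf or $b(\nu)\subseteq D_i^t$,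 and (iii) $D_i$ has not been eliminated by time $t$. $\nu(D_i^t)$ denotes the node with the largest cell of $\mathcal{Q}$ that is occupied by $D_i^t$. *)

From Stdlib Require Import Reals Lra Lia ZArith List.
From Coquelicot Require Import Coquelicot.
Open Scope R_scope.

Definition pt := (R * R)%type.

Definition dist (q r : pt) : R :=
  sqrt ((fst q - fst r) ^ 2 + (snd q - snd r) ^ 2).

(* Disks are indexed 1..n (smaller index = higher priority).
   t(i,j) = |p_i p_j| / (v_i + v_j). *)
Definition tij (p : nat -> pt) (v : nat -> R) (i j : nat) : R :=
  dist (p i) (p j) / (v i + v j).

Definition vmax (n : nat) (v : nat -> R) : R := fold_right Rmax (v 1%nat) (map v (seq 1 n)).
Definition vmin (n : nat) (v : nat -> R) : R := fold_right Rmin (v 1%nat) (map v (seq 1 n)).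
Definition DeltaV (n : nat) (v : nat -> R) : R := vmax n v / vmin n v.

(* Elimination times of the process: T k is t_k (p_infty = never removed).
   t_1 = oo; for 2 <= j <= n, D_j is removed at the first time t(i,j), i < j,
   at which D_i (the higher-priority disk) has not yet been removed, i.e.
   t_j = min { t(i,j) | 1 <= i < j, t(i,j) < t_i }. *)
Definition is_elim (p : nat -> pt) (v : nat -> R) (n : nat) (T : nat -> Rbar) : Prop :=
  T 1%nat = p_infty /\
  forall j, (2 <= j <= n)%nat ->
    exists i, (1 <= i < j)%nat /\ Rbar_lt (Finite (tij p v i j)) (T i) /\
      T j = Finite (tij p v i j) /\
      forall i', (1 <= i' < j)%nat -> Rbar_lt (Finite (tij p v i' j)) (T i') ->
        tij p v i j <= tij p v i' j.

(* Quadtree nodes: a node at level k (depth k) with cell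
   [a/2^k,(a+1)/2^k] x [b/2^k,(b+1)/2^k]. *)
Record node := Node { lvl : nat; ax : Z; ay : Z }.

Definition in_cell (nd : node) (q : pt) : Prop :=
  IZR (ax nd) / 2 ^ lvl nd <= fst q <= (IZR (ax nd) + 1) / 2 ^ lvl nd /\
  IZR (ay nd) / 2 ^ lvl nd <= snd q <= (IZR (ay nd) + 1) / 2 ^ lvl nd.

Definition cell_diam (nd : node) : R := sqrt 2 / 2 ^ lvl nd.

Definition cell_dist (n1 n2 : node) : Rbar :=
  Glb_Rbar (fun r => exists q1 q2, in_cell n1 q1 /\ in_cell n2 q2 /\ r = dist q1 q2).

(* Index (along one axis) of the level-k cell that a coordinate x in [0,1]
   is assigned to (floor(x 2^k), with x = 1 assigned to the last cell). *)
Definition cidx (k : nat) (x : R) : Z :=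
  Z.min (Int_part (x * 2 ^ k)) (2 ^ (Z.of_nat k) - 1)%Z.

(* Stopping condition of the subdivision at level L (the bottom level):
   every level-L cell contains at most one disk center, and every cell
   containing a center is surrounded by two layers of empty cells. *)
Definition qt_stop (p : nat -> pt) (n L : nat) : Prop :=
  (forall k1 k2, (1 <= k1 <= n)%nat -> (1 <= k2 <= n)%nat ->
     cidx L (fst (p k1)) = cidx L (fst (p k2)) ->
     cidx L (snd (p k1)) = cidx L (snd (p k2)) -> k1 = k2) /\
  (forall k1 k2, (1 <= k1 <= n)%nat -> (1 <= k2 <= n)%nat ->
     (cidx L (fst (p k1)), cidx L (snd (p k1))) <>
     (cidx L (fst (p k2)), cidx L (snd (p k2))) ->
     (2 < Z.abs (cidx L (fst (p k1)) - cidx L (fst (p k2))) \/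
      2 < Z.abs (cidx L (snd (p k1)) - cidx L (snd (p k2))))%Z).

(* D_i^t occupies node nd: (i) p_i in b(nd), (ii) nd is a leaf (level L)
   or b(nd) is contained in D_i^t, (iii) D_i not eliminated before t. *)
Definition occupies (p : nat -> pt) (v : nat -> R) (T : nat -> Rbar) (L i : nat)
    (t : R) (nd : node) : Prop :=
  (lvl nd <= L)%nat /\
  ax nd = cidx (lvl nd) (fst (p i)) /\ ay nd = cidx (lvl nd) (snd (p i)) /\
  (lvl nd = L \/ forall q, in_cell nd q -> dist q (p i) <= t * v i) /\
  Rbar_le (Finite t) (T i).

Definition is_nu (p : nat -> pt) (v : nat -> R) (T : nat -> Rbar) (L i : nat)
    (t : R) (nd : node) : Prop :=
  occupies p v T L i t nd /\
  forall nd', occupies p v T L i t nd' -> cell_diam nd' <= cell_diam nd.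

(* Write r_a = t v_a for t = t(i,j); the disks touch, so |p_i p_j| = r_i + r_j.
   The node nu = nu(D_a^t) is pinned between two scales.  Its parent cell, of
   diameter 2|nu|, contains p_a but is not inside D_a^t, so r_a < 2|nu| unless
   nu is the root.  Either nu is a leaf or its cell lies inside D_a^t, and then
   the corner farthest from p_a gives |nu| <= 2 r_a.  The distance bound
   follows since d(nu_i, nu_j) <= |p_i p_j| = r_i + r_j, and the ratio bound
   since r_i <= Delta r_j (a leaf being the smallest possible cell).  The
   elimination order and the quadtree's stopping rule play no further role. *)

From Stdlib Require Import Reals ZArith List Lra Lia.
From Coquelicot Require Import Coquelicot.
Open Scope R_scope.

Lemma pow2_gt0 (k : nat) : 0 < 2 ^ k.
Proof. apply pow_lt; lra. Qed.

Lemma sqrt2_mul (w : R) : 0 <= w -> sqrt 2 * w = sqrt (2 * w ^ 2).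
Proof. intros Hw. rewrite sqrt_mult_alt, sqrt_pow2; lra. Qed.

Lemma dist_le_diag (q r : pt) (w : R) :
  0 <= w -> Rabs (fst q - fst r) <= w -> Rabs (snd q - snd r) <= w ->
  dist q r <= sqrt 2 * w.
Proof.
  intros Hw Hx Hy. rewrite sqrt2_mul by exact Hw. apply sqrt_le_1_alt.
  rewrite <- (pow2_abs (fst q - fst r)), <- (pow2_abs (snd q - snd r)).
  pose proof (Rabs_pos (fst q - fst r)). pose proof (Rabs_pos (snd q - snd r)). nra.
Qed.

Lemma diag_le_dist (q r : pt) (w : R) :
  0 <= w -> w <= Rabs (fst q - fst r) -> w <= Rabs (snd q - snd r) ->
  sqrt 2 * w <= dist q r.
Proof.
  intros Hw Hx Hy. rewrite sqrt2_mul by exact Hw. apply sqrt_le_1_alt.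
  rewrite <- (pow2_abs (fst q - fst r)), <- (pow2_abs (snd q - snd r)). nra.
Qed.

Lemma far_endpoint (a w x : R) :
  0 <= w -> exists c, a <= c <= a + w /\ w / 2 <= Rabs (c - x).
Proof.
  intros Hw. destruct (Rle_lt_dec x (a + w / 2)).
  - exists (a + w). split; [lra|]. rewrite Rabs_right; lra.
  - exists a. split; [lra|]. rewrite Rabs_left1; lra.
Qed.

Lemma cidx_spec (k : nat) (x : R) : 0 <= x <= 1 ->
  IZR (cidx k x) / 2 ^ k <= x <= (IZR (cidx k x) + 1) / 2 ^ k.
Proof.
  intros Hx. pose proof (pow2_gt0 k) as Hk.
  assert (Hlast : IZR (2 ^ Z.of_nat k - 1) = 2 ^ k - 1).
  { rewrite minus_IZR, <- pow_IZR. reflexivity. }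
  assert (H : IZR (cidx k x) <= x * 2 ^ k <= IZR (cidx k x) + 1).
  { unfold cidx. destruct (base_Int_part (x * 2 ^ k)).
    destruct (Z.min_spec (Int_part (x * 2 ^ k)) (2 ^ Z.of_nat k - 1)) as [[_ ->]|[Hle ->]].
    - lra.
    - apply IZR_le in Hle. rewrite Hlast in *. nra. }
  split; [apply Rle_div_l | apply Rle_div_r]; lra.
Qed.

Lemma in_cell_cidx (k : nat) (q : pt) :
  0 <= fst q <= 1 -> 0 <= snd q <= 1 ->
  in_cell (Node k (cidx k (fst q)) (cidx k (snd q))) q.
Proof. intros Hx Hy. split; apply cidx_spec; assumption. Qed.

Lemma in_cell_side (nd : node) (q : pt) : in_cell nd q ->
  IZR (ax nd) * / 2 ^ lvl nd <= fst q <= IZR (ax nd) * / 2 ^ lvl nd + / 2 ^ lvl nd /\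
  IZR (ay nd) * / 2 ^ lvl nd <= snd q <= IZR (ay nd) * / 2 ^ lvl nd + / 2 ^ lvl nd.
Proof. unfold in_cell, Rdiv. intros H. rewrite !Rmult_plus_distr_r, !Rmult_1_l in H. exact H. Qed.

Lemma dist_le_cell_diam (nd : node) (q r : pt) :
  in_cell nd q -> in_cell nd r -> dist q r <= cell_diam nd.
Proof.
  intros Hq%in_cell_side Hr%in_cell_side.
  pose proof (Rinv_0_lt_compat _ (pow2_gt0 (lvl nd))).
  apply dist_le_diag; [lra | apply Rabs_le; lra ..].
Qed.

Lemma cell_diam_le_2radius (nd : node) (q : pt) (r : R) :
  (forall c, in_cell nd c -> dist c q <= r) -> cell_diam nd <= 2 * r.
Proof.
  intros Hball. set (a := IZR (ax nd) / 2 ^ lvl nd). set (b := IZR (ay nd) / 2 ^ lvl nd).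
  set (w := / 2 ^ lvl nd).
  assert (Hw : 0 < w) by apply Rinv_0_lt_compat, pow2_gt0.
  destruct (far_endpoint a w (fst q)) as [cx [Hcx Hfx]]; [lra|].
  destruct (far_endpoint b w (snd q)) as [cy [Hcy Hfy]]; [lra|].
  assert (Hc : in_cell nd (cx, cy)).
  { unfold in_cell, Rdiv in *. subst a b w. simpl. lra. }
  pose proof (diag_le_dist (cx, cy) q (w / 2) ltac:(lra)) as Hdiag.
  simpl in Hdiag. specialize (Hball _ Hc).
  unfold cell_diam, Rdiv. fold w. pose proof (Hdiag Hfx Hfy). lra.
Qed.

Lemma cell_diam_gt0 (nd : node) : 0 < cell_diam nd.
Proof.
  apply Rmult_lt_0_compat; [apply sqrt_lt_R0; lra | apply Rinv_0_lt_compat, pow2_gt0].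
Qed.

Lemma cell_diam_le (n1 n2 : node) : (lvl n1 <= lvl n2)%nat -> cell_diam n2 <= cell_diam n1.
Proof.
  intros Hl. apply Rmult_le_compat_l; [apply sqrt_pos|].
  apply Rinv_le_contravar; [apply pow2_gt0 | apply Rle_pow; [lra | exact Hl]].
Qed.

Lemma cell_diam_root (nd : node) : lvl nd = 0%nat -> cell_diam nd = sqrt 2.
Proof. intros Hl. unfold cell_diam. rewrite Hl. simpl. field. Qed.

Lemma cell_diam_le_sqrt2 (nd : node) : cell_diam nd <= sqrt 2.
Proof.
  rewrite <- (cell_diam_root (Node 0 0 0)) by reflexivity.
  apply cell_diam_le. simpl. lia.
Qed.

Lemma cell_diam_parent (nd : node) (m : nat) (x y : Z) :
  lvl nd = S m -> cell_diam (Node m x y) = 2 * cell_diam nd.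
Proof.
  intros Hl. unfold cell_diam. rewrite Hl. simpl.
  field. apply Rgt_not_eq, pow2_gt0.
Qed.

Lemma dist_unit_square_le (q r : pt) :
  0 <= fst q <= 1 -> 0 <= snd q <= 1 -> 0 <= fst r <= 1 -> 0 <= snd r <= 1 ->
  dist q r <= sqrt 2.
Proof.
  intros. rewrite <- (cell_diam_root (Node 0 0 0)) by reflexivity.
  apply dist_le_cell_diam; unfold in_cell; simpl; lra.
Qed.

Lemma cell_dist_le_dist (n1 n2 : node) (q1 q2 : pt) :
  in_cell n1 q1 -> in_cell n2 q2 -> Rbar_le (cell_dist n1 n2) (dist q1 q2).
Proof.
  intros H1 H2. unfold cell_dist.
  destruct (Glb_Rbar_correct
    (fun r => exists q1 q2, in_cell n1 q1 /\ in_cell n2 q2 /\ r = dist q1 q2)) as [Hlb _].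
  apply Hlb. exists q1, q2. auto.
Qed.

Section Nu.

Variables (p : nat -> pt) (v : nat -> R) (T : nat -> Rbar) (L a : nat) (t : R) (nd : node).
Hypotheses (Hx : 0 <= fst (p a) <= 1) (Hy : 0 <= snd (p a) <= 1).
Hypothesis Hnu : is_nu p v T L a t nd.

Lemma in_cell_nu : in_cell nd (p a).
Proof.
  destruct Hnu as [[_ [Hax [Hay _]]] _].
  unfold in_cell. rewrite Hax, Hay. split; apply cidx_spec; assumption.
Qed.

Lemma nu_radius_lt : cell_diam nd = sqrt 2 \/ t * v a < 2 * cell_diam nd.
Proof.
  destruct (lvl nd) as [|m] eqn:Hl; [left; exact (cell_diam_root nd Hl)|right].
  destruct (Rlt_le_dec (t * v a) (2 * cell_diam nd)) as [Hlt|Hge]; [exact Hlt|].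
  exfalso.
  set (parent := Node m (cidx m (fst (p a))) (cidx m (snd (p a)))).
  assert (Hdiam : cell_diam parent = 2 * cell_diam nd) by exact (cell_diam_parent nd m _ _ Hl).
  assert (Hocc : occupies p v T L a t parent).
  { destruct Hnu as [[HL [_ [_ [_ Halive]]]] _].
    repeat split; simpl; try reflexivity; [lia| |exact Halive].
    right. intros q Hq.
    pose proof (dist_le_cell_diam parent q (p a) Hq (in_cell_cidx m (p a) Hx Hy)). lra. }
  destruct Hnu as [_ Hmax]. pose proof (Hmax _ Hocc). pose proof (cell_diam_gt0 nd). lra.
Qed.

Lemma nu_diam_le_radius : lvl nd = L \/ cell_diam nd <= 2 * (t * v a).
Proof.
  destruct Hnu as [[_ [_ [_ [Hleaf _]]]] _].
  destruct Hleaf as [Hleaf|Hdisk]; [left; exact Hleaf|right].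
  exact (cell_diam_le_2radius nd (p a) _ Hdisk).
Qed.

End Nu.

Lemma fold_right_Rmax_ge (x0 y : R) (l : list R) : In y l -> y <= fold_right Rmax x0 l.
Proof.
  induction l as [|z l IH]; simpl; [tauto|].
  intros [<-|Hy]; [apply Rmax_l | eapply Rle_trans; [exact (IH Hy) | apply Rmax_r]].
Qed.

Lemma fold_right_Rmin_le (x0 y : R) (l : list R) : In y l -> fold_right Rmin x0 l <= y.
Proof.
  induction l as [|z l IH]; simpl; [tauto|].
  intros [<-|Hy]; [apply Rmin_l | eapply Rle_trans; [apply Rmin_r | exact (IH Hy)]].
Qed.

Lemma fold_right_Rmin_gt (m x0 : R) (l : list R) :
  m < x0 -> (forall y, In y l -> m < y) -> m < fold_right Rmin x0 l.
Proof.
  intros H0. induction l as [|z l IH]; simpl; intros Hl; [exact H0|].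
  apply Rmin_glb_lt; [apply Hl; left; reflexivity | apply IH; intros y Hy; apply Hl; right; exact Hy].
Qed.

Section Speeds.

Variables (n : nat) (v : nat -> R).
Hypothesis Hv : forall k, (1 <= k <= n)%nat -> 0 < v k.

Lemma vmin_le_vmax (k : nat) : (1 <= k <= n)%nat -> vmin n v <= v k <= vmax n v.
Proof.
  intros Hk. assert (Hin : In (v k) (map v (seq 1 n))) by (apply in_map, in_seq; lia).
  split; [apply fold_right_Rmin_le | apply fold_right_Rmax_ge]; exact Hin.
Qed.

Lemma vmin_gt0 : (1 <= n)%nat -> 0 < vmin n v.
Proof.
  intros Hn. apply fold_right_Rmin_gt; [apply Hv; lia|].
  intros y Hy. apply in_map_iff in Hy. destruct Hy as [k [<- Hk%in_seq]]. apply Hv. lia.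
Qed.

Lemma v_le_DeltaV (a b : nat) :
  (1 <= a <= n)%nat -> (1 <= b <= n)%nat -> v a <= DeltaV n v * v b.
Proof.
  intros Ha Hb. pose proof (vmin_gt0 ltac:(lia)) as Hmin.
  pose proof (vmin_le_vmax a Ha). pose proof (vmin_le_vmax b Hb).
  assert (Hb1 : 1 <= v b / vmin n v) by (apply Rle_div_r; lra).
  unfold DeltaV. replace (vmax n v / vmin n v * v b) with (vmax n v * (v b / vmin n v))
    by (field; lra).
  pose proof (Hv a Ha). nra.
Qed.

Lemma DeltaV_ge1 : (1 <= n)%nat -> 1 <= DeltaV n v.
Proof.
  intros Hn. pose proof (Hv 1 ltac:(lia)). pose proof (v_le_DeltaV 1 1 ltac:(lia) ltac:(lia)).
  nra.
Qed.

End Speeds.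

Section TwoDisks.

Variables (p : nat -> pt) (v : nat -> R) (T : nat -> Rbar) (L a b : nat) (t : R) (na nb : node).
Hypotheses (Hxa : 0 <= fst (p a) <= 1) (Hya : 0 <= snd (p a) <= 1).
Hypotheses (Hxb : 0 <= fst (p b) <= 1) (Hyb : 0 <= snd (p b) <= 1).
Hypotheses (Hnua : is_nu p v T L a t na) (Hnub : is_nu p v T L b t nb).

Lemma nu_diam_le_ratio (D : R) :
  0 < v a -> 1 <= D -> v a <= D * v b -> cell_diam na <= 4 * D * cell_diam nb.
Proof.
  intros Hva HD Hab. pose proof (cell_diam_gt0 na). pose proof (cell_diam_gt0 nb).
  destruct (nu_diam_le_radius p v T L a t na Hnua) as [Hleaf|Hup].
  - assert (cell_diam na <= cell_diam nb).
    { apply cell_diam_le. rewrite Hleaf. apply Hnub. }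
    nra.
  - destruct (nu_radius_lt p v T L b t nb Hxb Hyb Hnub) as [Hroot|Hlow].
    + pose proof (cell_diam_le_sqrt2 na). nra.
    + assert (Ht : 0 < t) by nra.
      assert (t * v a <= D * (t * v b)) by nra.
      nra.
Qed.

Lemma nu_dist_le :
  dist (p a) (p b) <= t * v a + t * v b ->
  dist (p a) (p b) <= 2 * (cell_diam na + cell_diam nb).
Proof.
  intros Hd. pose proof (cell_diam_gt0 na). pose proof (cell_diam_gt0 nb).
  pose proof (dist_unit_square_le (p a) (p b) Hxa Hya Hxb Hyb).
  destruct (nu_radius_lt p v T L a t na Hxa Hya Hnua);
    destruct (nu_radius_lt p v T L b t nb Hxb Hyb Hnub); lra.
Qed.

End TwoDisks.

Lemma ratio_bounds (x y c : R) :
  0 < x -> 0 < y -> x <= c * y -> y <= c * x -> 1 / c <= x / y <= c.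
Proof.
  intros Hx Hy Hxy Hyx. assert (Hc : 0 < c) by nra.
  split; [|apply Rle_div_l; lra].
  apply Rmult_le_reg_r with (c * y); [nra|].
  replace (1 / c * (c * y)) with y by (field; lra).
  replace (x / y * (c * y)) with (c * x) by (field; lra). exact Hyx.
Qed.

Theorem lemma10 (n : nat) (p : nat -> pt) (v : nat -> R) (T : nat -> Rbar)
    (L i j : nat) (ni nj : node) :
  (forall k, (1 <= k <= n)%nat -> 0 <= fst (p k) <= 1 /\ 0 <= snd (p k) <= 1) ->
  (forall k l, (1 <= k <= n)%nat -> (1 <= l <= n)%nat -> k <> l -> p k <> p l) ->
  (forall k, (1 <= k <= n)%nat -> 0 < v k) ->
  (forall a b c d, (1 <= a < b)%nat -> (b <= n)%nat -> (1 <= c < d)%nat -> (d <= n)%nat ->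
     (a, b) <> (c, d) -> tij p v a b <> tij p v c d) ->
  is_elim p v n T ->
  qt_stop p n L -> (forall k, (k < L)%nat -> ~ qt_stop p n k) ->
  (2 <= i <= n)%nat -> (1 <= j <= i - 1)%nat ->
  T i = Finite (tij p v i j) ->
  is_nu p v T L i (tij p v i j) ni ->
  is_nu p v T L j (tij p v i j) nj ->
  Rbar_le (cell_dist ni nj) (Finite (2 * (cell_diam ni + cell_diam nj))) /\
  1 / (4 * DeltaV n v) <= cell_diam ni / cell_diam nj <= 4 * DeltaV n v.
Proof.
  intros Hunit _ Hv _ _ _ _ Hi Hj _ Hnui Hnuj.
  assert (Hin : (1 <= i <= n)%nat) by lia. assert (Hjn : (1 <= j <= n)%nat) by lia.
  destruct (Hunit i Hin) as [Hxi Hyi]. destruct (Hunit j Hjn) as [Hxj Hyj].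
  pose proof (Hv i Hin). pose proof (Hv j Hjn).
  set (t := tij p v i j) in *.
  assert (Htouch : dist (p i) (p j) = t * v i + t * v j) by (unfold t, tij; field; lra).
  pose proof (DeltaV_ge1 n v Hv ltac:(lia)) as HD.
  split.
  - eapply Rbar_le_trans.
    + apply cell_dist_le_dist; [apply (in_cell_nu p v T L i t ni) | apply (in_cell_nu p v T L j t nj)]; assumption.
    + apply (nu_dist_le p v T L i j t); auto. lra.
  - apply ratio_bounds; try apply cell_diam_gt0.
    + apply (nu_diam_le_ratio p v T L i j t); auto. apply v_le_DeltaV; assumption.
    + apply (nu_diam_le_ratio p v T L j i t); auto. apply v_le_DeltaV; assumption.
Qed.
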